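(* Let $Y'\subseteq Y$ and $Z'\subseteq Z$ and let $f\in\mathbb{F}[Y',Z']$. Let $a=\min\{|Y'|,|Z'|\}$. Then $\mathrm{maxrank}(M_f)\le 2^a$.
   Context: $\mathbb{F}$ is a field, $Y=\{y_1,\dots,y_m\}$ and $Z=\{z_1,\dots,z_m\}$ are disjoint sets of variables. For $f\in\mathbb{F}[Y,Z]$, the polynomial coefficient matrix $M_f$ is the $2^m\times 2^m$ matrix with entries in $\mathbb{F}[Y,Z]$, rows indexed by monic multilinear monomials $p$ in $Y$ and columns by monic multilinear monomials $q$ in $Z$, where $M_f(p,q)=G$ if and only if $f$ can be uniquely written as $f=pq\,G+Q$ with $G,Q\in\mathbb{F}[Y,Z]$ such that $G$ contains no variable other than those present in $p$ and $q$, and $Q$ has no monomial which is divisible by $pq$ and contains only variables present in $p$ and $q$. For $S:Y\cup Z\to\mathbb{F}$, $M_f|_S$ is obtained by evaluating each entry at $S$, and $\mathrm{maxrank}(M_f)=\max_S\mathrm{rank}(M_f|_S)$. *)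

From HB Require Import structures.
From mathcomp Require Import all_boot all_order all_algebra.
From mathcomp Require Import mpoly.
Set Implicit Arguments. Unset Strict Implicit. Unset Printing Implicit Defensive.
Import Order.TTheory GRing.Theory.
Local Open Scope ring_scope.

Definition yvar (m : nat) (i : 'I_m) : 'I_(m + m) := lshift m i.
Definition zvar (m : nat) (j : 'I_m) : 'I_(m + m) := rshift m j.

(* The set of variables Y_P u Z_Q (P indexes a subset of Y, Q of Z).
   A monic multilinear monomial p in Y is identified with its set of
   variables P, likewise q in Z with Q. *)
Definition vars_of (m : nat) (P Q : {set 'I_m}) : {set 'I_(m + m)} :=
  (@yvar m @: P) :|: (@zvar m @: Q).

Definition mnm_supp (n : nat) (mu : 'X_{1..n}) : {set 'I_n} :=
  [set k | mu k != 0%N].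

Definition ind_mnm (n : nat) (V : {set 'I_n}) : 'X_{1..n} :=
  [multinom (nat_of_bool (k \in V)) | k < n].

Definition poly_in_vars (F : fieldType) (n : nat) (f : {mpoly F[n]})
    (V : {set 'I_n}) : Prop :=
  forall mu, mu \in msupp f -> mnm_supp mu \subset V.

(* Entry M_f(p,q) = G, where f = p q G + Q: the terms of f whose monomial
   contains exactly the variables of p and q, divided by p q. *)
Definition pcm_entry (F : fieldType) (m : nat) (f : {mpoly F[m + m]})
    (P Q : {set 'I_m}) : {mpoly F[m + m]} :=
  \sum_(mu <- msupp f | mnm_supp mu == vars_of P Q)
     f@_mu *: 'X_[(mu - ind_mnm (vars_of P Q))%MM].

(* Polynomial coefficient matrix M_f, rows/columns indexed (via enum) by
   subsets of Y resp. Z, i.e. by monic multilinear monomials; size 2^m. *)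
Definition pcm (F : fieldType) (m : nat) (f : {mpoly F[m + m]}) :
    'M[{mpoly F[m + m]}]_(#|{set 'I_m}|, #|{set 'I_m}|) :=
  \matrix_(i, j) pcm_entry f (enum_val i) (enum_val j).

Definition pcm_eval (F : fieldType) (m : nat) (f : {mpoly F[m + m]})
    (S : 'I_(m + m) -> F) : 'M[F]_(#|{set 'I_m}|, #|{set 'I_m}|) :=
  map_mx (fun g => g.@[S]) (pcm f).

From HB Require Import structures.
From mathcomp Require Import all_boot all_order all_algebra.
From mathcomp Require Import mpoly.
Set Implicit Arguments. Unset Strict Implicit. Unset Printing Implicit Defensive.
Import GRing.Theory.
Local Open Scope ring_scope.

(* Every monomial of f lies in Y' u Z', so the entry M_f(p, q) vanishes
   unless p only uses variables of Y' and q only variables of Z'.  Hence all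
   nonzero rows of M_f|_S are indexed by the 2^|Y'| subsets of Y', and all
   nonzero columns by the 2^|Z'| subsets of Z'; the rank is bounded by both. *)

Lemma mxrank_le_nz_rows (F : fieldType) m n (A : 'M[F]_(m, n)) (R : {set 'I_m}) :
  (forall i j, i \notin R -> A i j = 0) -> (\rank A <= #|R|)%N.
Proof.
move=> A0; pose B := rowsub (enum_val : 'I_#|R| -> 'I_m) A.
have sAB : (A <= B)%MS.
  apply/row_subP => i; have [iR | niR] := boolP (i \in R).
    by rewrite -(enum_rankK_in iR iR) -row_rowsub row_sub.
  suff -> : row i A = 0 by exact: sub0mx.
  by apply/rowP => j; rewrite !mxE A0.
exact: leq_trans (mxrankS sAB) (rank_leq_row B).
Qed.

Lemma card_enum_val_subset (T : finType) (A : {set T}) :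
  (#|[set i : 'I_#|{set T}| | enum_val i \subset A]| <= 2 ^ #|A|)%N.
Proof.
rewrite -card_powerset -(card_imset _ enum_val_inj).
apply/subset_leq_card/subsetP => _ /imsetP[i + ->].
by rewrite inE powersetE.
Qed.

Section VarsOf.

Variable m : nat.
Implicit Types P Q : {set 'I_m}.

Lemma mem_vars_of_yvar P Q i : (yvar i \in vars_of P Q) = (i \in P).
Proof.
rewrite !inE (mem_imset _ _ (@lshift_inj m m)).
by apply/orP/idP => [[// | /imsetP[j _ /eqP]] | ->]; [rewrite eq_lrshift | left].
Qed.

Lemma mem_vars_of_zvar P Q i : (zvar i \in vars_of P Q) = (i \in Q).
Proof.
rewrite !inE (mem_imset _ _ (@rshift_inj m m)).
by apply/orP/idP => [[/imsetP[j _ /eqP] | //] | ->]; [rewrite eq_rlshift | right].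
Qed.

Lemma vars_of_subset P Q P' Q' :
  (vars_of P Q \subset vars_of P' Q') = (P \subset P') && (Q \subset Q').
Proof.
apply/idP/andP => [/subsetP sPQ | [sPP' sQQ']]; last by rewrite setUSS ?imsetS.
split; apply/subsetP => i iP.
  by rewrite -(mem_vars_of_yvar P' Q') sPQ ?mem_vars_of_yvar.
by rewrite -(mem_vars_of_zvar P' Q') sPQ ?mem_vars_of_zvar.
Qed.

End VarsOf.

Lemma pcm_entry_eq0 (F : fieldType) m (f : {mpoly F[m + m]})
    (V : {set 'I_(m + m)}) (P Q : {set 'I_m}) :
  poly_in_vars f V -> ~~ (vars_of P Q \subset V) -> pcm_entry f P Q = 0.
Proof.
move=> fV nsPQ; rewrite /pcm_entry big_seq_cond big1 // => mu /andP[mu_f /eqP].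
by move=> supp_mu; move: (fV mu mu_f); rewrite supp_mu (negbTE nsPQ).
Qed.

Lemma pcm_eval_eq0 (F : fieldType) m (Y' Z' : {set 'I_m})
    (f : {mpoly F[m + m]}) (S : 'I_(m + m) -> F) (i j : 'I_#|{set 'I_m}|) :
  poly_in_vars f (vars_of Y' Z') ->
  ~~ (enum_val i \subset Y') || ~~ (enum_val j \subset Z') ->
  pcm_eval f S i j = 0.
Proof.
move=> fYZ nsij; rewrite !mxE (pcm_entry_eq0 fYZ) ?meval0 //.
by rewrite vars_of_subset negb_and.
Qed.

Theorem proposition1 (F : fieldType) (m : nat) (Y' Z' : {set 'I_m})
    (f : {mpoly F[m + m]}) :
  poly_in_vars f (vars_of Y' Z') ->
  forall S : 'I_(m + m) -> F,
    (\rank (pcm_eval f S) <= 2 ^ minn #|Y'| #|Z'|)%N.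
Proof.
move=> fYZ S.
have rankY : (\rank (pcm_eval f S) <= 2 ^ #|Y'|)%N.
  apply: leq_trans (card_enum_val_subset Y'); apply: mxrank_le_nz_rows => i j.
  by rewrite inE => nsY; rewrite (pcm_eval_eq0 _ fYZ) ?nsY.
have rankZ : (\rank (pcm_eval f S) <= 2 ^ #|Z'|)%N.
  rewrite -mxrank_tr; apply: leq_trans (card_enum_val_subset Z').
  apply: mxrank_le_nz_rows => j i; rewrite inE mxE => nsZ.
  by rewrite (pcm_eval_eq0 _ fYZ) ?nsZ ?orbT.
by case: (leqP #|Y'| #|Z'|).
Qed.
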